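(* Let $\rho$ be a two-qubit state on $\mathbb{C}^2\otimes\mathbb{C}^2$ whose correlation matrix $T$ is diagonal. If $d_{\max}(\rho)>1/\sqrt2$, then $M(\rho)>1$. The converse does not hold: there exist two-qubit states $\rho$ with diagonal correlation matrix such that $M(\rho)>1$ but $d_{\max}(\rho)\leq 1/\sqrt2$.
   Context: Let $\sigma_0,\sigma_1,\sigma_2$ be the Pauli matrices $X,Y,Z$. Every two-qubit state can be written as $\rho=\frac14\big(I\otimes I+\sum_i r^A_i\sigma_i\otimes I+\sum_j r^B_j I\otimes\sigma_j+\sum_{i,j}T_{ij}\sigma_i\otimes\sigma_j\big)$, with $r^A_i=\mathrm{Tr}(\sigma_i\rho_A)$, $r^B_j=\mathrm{Tr}(\sigma_j\rho_B)$ and real correlation matrix $T_{ij}=\mathrm{Tr}((\sigma_i\otimes\sigma_j)\rho)$. Define $M(\rho)=\tau_1+\tau_2$, the sum of the two largest eigenvalues of $T^TT$. A unitary $U^B$ on $\mathbb{C}^2$ is called cyclic for $\rho$ if $[\rho_B,U^B]=0$, where $\rho_B=\mathrm{Tr}_A\rho$. Set $\rho_f=(I\otimes U^B)\rho(I\otimes U^{B\dagger})$, define $d(\rho,U^B)=\frac{1}{\sqrt2}\|\rho-\rho_f\|_F$ (Frobenius norm), and $d_{\max}(\rho)=\max\{d(\rho,U^B): U^B\text{ unitary},\ [\rho_B,U^B]=0\}$. *)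

From HB Require Import structures.
From mathcomp Require Import all_boot all_order all_algebra.
From mathcomp Require Import complex mxtens.
From mathcomp Require Import boolp classical_sets reals.
Set Implicit Arguments. Unset Strict Implicit. Unset Printing Implicit Defensive.
Import Order.TTheory GRing.Theory Num.Theory.
Local Open Scope ring_scope.
Local Open Scope classical_set_scope.

Section TwoQubit.
Variable R : realType.
Local Notation C := (R[i]).

Definition adj m n (A : 'M[C]_(m, n)) : 'M[C]_(n, m) := \matrix_(i, j) (A j i)^*.

Definition pauliX : 'M[C]_2 := \matrix_(a, b) (if a == b then 0 else 1).
Definition pauliY : 'M[C]_2 :=
  \matrix_(a, b) (if a == b then 0 else if a == 0 then - 'i else 'i).
Definition pauliZ : 'M[C]_2 :=
  \matrix_(a, b) (if a == b then (if a == 0 then 1 else -1) else 0).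
Definition pauli (i : 'I_3) : 'M[C]_2 :=
  match val i with 0 => pauliX | 1 => pauliY | _ => pauliZ end.

Definition is_state (rho : 'M[C]_(2 * 2)) : Prop :=
  [/\ adj rho = rho,
      (forall v : 'cV[C]_(2 * 2), 0 <= (adj v *m rho *m v) 0 0)
    & \tr rho = 1].

(* reduced state rho_B = Tr_A rho  (first tensor factor is A) *)
Definition ptraceA (rho : 'M[C]_(2 * 2)) : 'M[C]_2 :=
  \matrix_(j, k) \sum_(a < 2) rho (mxtens_index (a, j)) (mxtens_index (a, k)).

(* correlation matrix T_ij = Tr((sigma_i (x) sigma_j) rho), which is real for
   Hermitian rho; we take its real part to view it in R. *)
Definition corr (rho : 'M[C]_(2 * 2)) : 'M[R]_3 :=
  \matrix_(i, j) complex.Re (\tr ((pauli i *t pauli j) *m rho)).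

(* M(rho) = tau_1 + tau_2, the sum of the two largest eigenvalues
   (with multiplicity) of T^T T *)
Definition sorted_spectrum (A : 'M[R]_3) (s : seq R) : Prop :=
  [/\ size s = 3, sorted >=%R s & char_poly A = \prod_(x <- s) ('X - x%:P)].
Definition Mval (rho : 'M[C]_(2 * 2)) : R :=
  xget 0 [set m | exists s, sorted_spectrum ((corr rho)^T *m corr rho) s
                            /\ m = s`_0 + s`_1].

Definition unitary (U : 'M[C]_2) : Prop := adj U *m U = 1%:M.

Definition cyclic (rho : 'M[C]_(2 * 2)) (U : 'M[C]_2) : Prop :=
  unitary U /\ ptraceA rho *m U = U *m ptraceA rho.

Definition rho_f (rho : 'M[C]_(2 * 2)) (U : 'M[C]_2) : 'M[C]_(2 * 2) :=
  (1%:M *t U) *m rho *m adj (1%:M *t U).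

Definition frob m n (A : 'M[C]_(m, n)) : R :=
  Num.sqrt (\sum_i \sum_j complex.Re (A i j * (A i j)^*)).

Definition dist (rho : 'M[C]_(2 * 2)) (U : 'M[C]_2) : R :=
  (Num.sqrt 2)^-1 * frob (rho - rho_f rho U).

(* d_max(rho) = max over cyclic unitaries (attained; we use the supremum) *)
Definition dmax (rho : 'M[C]_(2 * 2)) : R :=
  sup [set dist rho U | U in [set U | cyclic rho U]].

End TwoQubit.

From HB Require Import structures.
From mathcomp Require Import all_boot all_order all_algebra.
From mathcomp Require Import complex mxtens.
From mathcomp Require Import boolp classical_sets reals.
From mathcomp Require Import ring lra.
Set Implicit Arguments. Unset Strict Implicit. Unset Printing Implicit Defensive.
Import Order.TTheory GRing.Theory Num.Theory.
Local Open Scope ring_scope.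

(* Write rho in blocks [[A, B], [B^*, D]] along the first qubit.  Conjugation by
   1 (x) U acts blockwise, and a cyclic U commutes with rho_B = A + D, so
   |rho - rho_f|^2 only sees the displacements K - U K U^* of A - D and of B.  A
   diagonal correlation matrix diag(t_x, t_y, t_z) forces A - D = g + (t_z / 2) Z
   and B = b + (t_x X - i t_y Y) / 4, whose scalar parts do not move, hence
   4 |rho - rho_f|^2 = t_x^2 w_X + t_y^2 w_Y + t_z^2 w_Z with
   w_P = 2 - Re tr(P U P U^{*}).  For unitary U these weights satisfy
   0 <= w_P <= 4 and w_X + w_Y + w_Z <= 8, and the maximum of the linear form over
   this polytope is 4 (t_x^2 + t_y^2 + t_z^2 - min t_i^2) = 4 M(rho).  So
   d(rho, U)^2 <= M(rho) / 2, and d_max > 1 / sqrt 2 forces M > 1.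
   Conversely rho = (3|00><00| + |00><11| + |11><00| + |11><11|) / 4 has
   T = diag(1/2, -1/2, 1) and M = 5/4, but its rho_B is non-degenerate, so every
   cyclic U is diagonal, w_Z = 0 and d^2 <= 1/4. *)

Section ComplexMatrices.
Variable R : realType.
Local Notation C := R[i].

Lemma adjK m n (A : 'M[C]_(m, n)) : adj (adj A) = A.
Proof. by apply/matrixP => i j; rewrite !mxE conjCK. Qed.

Lemma adj_mul m n p (A : 'M[C]_(m, n)) (B : 'M[C]_(n, p)) :
  adj (A *m B) = adj B *m adj A.
Proof.
apply/matrixP => i j; rewrite !mxE rmorph_sum; apply: eq_bigr => k _.
by rewrite !mxE rmorphM mulrC.
Qed.

Lemma adjB m n (A B : 'M[C]_(m, n)) : adj (A - B) = adj A - adj B.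
Proof. by apply/matrixP => i j; rewrite !mxE rmorphB. Qed.

Lemma adj1mx n : adj (1%:M : 'M[C]_n) = 1%:M.
Proof. by apply/matrixP => i j; rewrite !mxE eq_sym rmorph_nat. Qed.

Lemma adj_tens m n p q (A : 'M[C]_(m, n)) (B : 'M[C]_(p, q)) :
  adj (A *t B) = adj A *t adj B.
Proof.
apply/matrixP => i j.
case: (mxtens_indexP i) => a k; case: (mxtens_indexP j) => b l.
by rewrite mxE !tensmxE !mxE rmorphM.
Qed.

Lemma mxtrace_adj n (A : 'M[C]_n) : \tr (adj A) = (\tr A)^*.
Proof. by rewrite /mxtrace rmorph_sum; apply: eq_bigr => i _; rewrite mxE. Qed.

Lemma conj_rect (a b : R) : ((a +i* b)%C)^* = (a +i* - b)%C :> C.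
Proof. by []. Qed.

Lemma Re_conjc (z : C) : complex.Re z^* = complex.Re z.
Proof. by case: z. Qed.

Lemma Re_sum I (r : seq I) (P : pred I) (F : I -> C) :
  complex.Re (\sum_(i <- r | P i) F i) = \sum_(i <- r | P i) complex.Re (F i).
Proof.
elim/big_rec2: _ => [|i x y _ <-]; first by [].
by case: (F i) => a b; case: y.
Qed.

Definition frob2 m n (X : 'M[C]_(m, n)) : R :=
  \sum_i \sum_j complex.Re (X i j * (X i j)^*).

Lemma frobE m n (X : 'M[C]_(m, n)) : frob X = Num.sqrt (frob2 X).
Proof. by []. Qed.

Lemma frob2_tr m n (X : 'M[C]_(m, n)) : frob2 X = complex.Re (\tr (X *m adj X)).
Proof.
rewrite /frob2 /mxtrace Re_sum; apply: eq_bigr => i _.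
by rewrite mxE Re_sum; apply: eq_bigr => j _; rewrite mxE.
Qed.

Lemma frob2_adj m n (X : 'M[C]_(m, n)) : frob2 (adj X) = frob2 X.
Proof. by rewrite !frob2_tr adjK mxtrace_mulC. Qed.

Lemma frob2E m n (X : 'M[C]_(m, n)) :
  frob2 X = \sum_i \sum_j (complex.Re (X i j) ^+ 2 + complex.Im (X i j) ^+ 2).
Proof.
apply: eq_bigr => i _; apply: eq_bigr => j _.
by case: (X i j) => x y /=; ring.
Qed.

Lemma frob2_ge0 m n (X : 'M[C]_(m, n)) : 0 <= frob2 X.
Proof.
by rewrite frob2E sumr_ge0 // => i _; rewrite sumr_ge0 // => j _; rewrite addr_ge0 ?sqr_ge0.
Qed.

Lemma frob2_scale m n (k : R) (X : 'M[C]_(m, n)) :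
  frob2 ((k%:C)%C *: X) = k ^+ 2 * frob2 X.
Proof.
rewrite !frob2E mulr_sumr; apply: eq_bigr => i _; rewrite mulr_sumr.
by apply: eq_bigr => j _; rewrite !mxE; case: (X i j) => x y /=; ring.
Qed.

Lemma frob2N m n (X : 'M[C]_(m, n)) : frob2 (- X) = frob2 X.
Proof.
rewrite !frob2E; apply: eq_bigr => i _; apply: eq_bigr => j _.
by rewrite !mxE; case: (X i j) => x y /=; rewrite !sqrrN.
Qed.

Lemma frob2_double m n (X : 'M[C]_(m, n)) : frob2 (X + X) = 4 * frob2 X.
Proof.
rewrite !frob2E mulr_sumr; apply: eq_bigr => i _; rewrite mulr_sumr.
by apply: eq_bigr => j _; rewrite !mxE; case: (X i j) => x y /=; ring.
Qed.

Definition sub_conj n (U K : 'M[C]_n) : 'M[C]_n := K - U *m K *m adj U.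

Lemma frob2_sub_conj n (U X : 'M[C]_n) : adj U *m U = 1%:M ->
  frob2 (sub_conj U X) =
  2 * frob2 X - 2 * complex.Re (\tr (X *m U *m adj X *m adj U)).
Proof.
move=> unitU.
have UK Y : U *m Y *m adj U *m (U *m (adj Y *m adj U)) = U *m (Y *m adj Y) *m adj U.
  by rewrite -!mulmxA [adj U *m (U *m _)]mulmxA unitU mul1mx.
have trK Y : \tr (U *m Y *m adj U) = \tr Y.
  by rewrite mxtrace_mulC mulmxA unitU mul1mx.
have Re_cross : complex.Re (\tr (U *m X *m adj U *m adj X))
              = complex.Re (\tr (X *m U *m adj X *m adj U)).
  rewrite -Re_conjc -mxtrace_adj !adj_mul !adjK mxtrace_mulC !mulmxA.
  by rewrite mxtrace_mulC !mulmxA.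
rewrite /sub_conj !frob2_tr adjB !adj_mul adjK mulmxBl !mulmxBr !raddfB /=.
rewrite UK trK !mulmxA Re_cross; ring.
Qed.

End ComplexMatrices.

Section ConjugationDisplacement.
Variable R : realType.
Local Notation C := R[i].
Variables (n : nat) (U : 'M[C]_n).
Hypothesis unitU : U *m adj U = 1%:M.

Lemma sub_conj_scalar_add (g : C) (K : 'M[C]_n) :
  sub_conj U (g%:M + K) = sub_conj U K.
Proof.
rewrite /sub_conj mulmxDr mulmxDl mul_mx_scalar -scalemxAl unitU scalemx1.
by rewrite opprD addrACA subrr add0r.
Qed.

Lemma frob2_sub_conj_scale (k : R) (K : 'M[C]_n) :
  frob2 (sub_conj U ((k%:C)%C *: K)) = k ^+ 2 * frob2 (sub_conj U K).
Proof. by rewrite /sub_conj -scalemxAr -scalemxAl -scalerBr frob2_scale. Qed.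

Lemma sub_conj_adj (K : 'M[C]_n) :
  sub_conj U (adj K) = adj (sub_conj U K).
Proof. by rewrite /sub_conj adjB !adj_mul adjK mulmxA. Qed.

Lemma frob2_sub_conj_split (A D : 'M[C]_n) : (A + D) *m U = U *m (A + D) ->
  2 * (frob2 (sub_conj U A) + frob2 (sub_conj U D)) = frob2 (sub_conj U (A - D)).
Proof.
move=> commU; rewrite /sub_conj.
(* [sub_conj U (A + D) = 0], so the displacements of [A] and [D] are opposite. *)
have DA : D - U *m D *m adj U = - (A - U *m A *m adj U).
  apply/eqP; rewrite -addr_eq0 addrC addrACA -opprD -mulmxDl -mulmxDr -commU.
  by rewrite -mulmxA unitU mulmx1 subrr.
have -> : (A - D) - U *m (A - D) *m adj U
          = (A - U *m A *m adj U) - (D - U *m D *m adj U).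
  by rewrite mulmxBr mulmxBl !opprB addrACA [in RHS]addrACA [- D + _]addrC.
by rewrite DA opprK frob2N frob2_double; ring.
Qed.

End ConjugationDisplacement.

Lemma sum_ord2 (V : nmodType) (F : 'I_2 -> V) : \sum_i F i = F 0 + F 1.
Proof. by rewrite !big_ord_recl big_ord0 addr0; congr (F _ + F _); apply: val_inj. Qed.

Lemma eq_mx2 (T : Type) (A B : 'M[T]_2) :
  A 0 0 = B 0 0 -> A 0 1 = B 0 1 -> A 1 0 = B 1 0 -> A 1 1 = B 1 1 -> A = B.
Proof.
move=> e00 e01 e10 e11; apply/matrixP => i j.
have -> : i = (if val i == 0%N then 0 else 1) by case: i => [[|[|i]] hi]; apply: val_inj.
have -> : j = (if val j == 0%N then 0 else 1) by case: j => [[|[|j]] hj]; apply: val_inj.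
by case: (val i == 0%N); case: (val j == 0%N).
Qed.

Section TensorBlocks.
Variable R : realType.
Local Notation C := R[i].

Lemma big_mxtens_index (V : nmodType) m n (F : 'I_(m * n) -> V) :
  \sum_k F k = \sum_(i < m) \sum_(j < n) F (mxtens_index (i, j)).
Proof.
rewrite pair_big /= (reindex (@mxtens_index m n)) /=; last first.
  by exists (@mxtens_unindex m n) => x _; rewrite (mxtens_indexK, mxtens_unindexK).
by apply: eq_bigr => -[].
Qed.

Definition tblock m n (M : 'M[C]_(m * n)) (a b : 'I_m) : 'M[C]_n :=
  \matrix_(j, k) M (mxtens_index (a, j)) (mxtens_index (b, k)).

Lemma frob2_tblock m n (M : 'M[C]_(m * n)) :
  frob2 M = \sum_a \sum_b frob2 (tblock M a b).
Proof.
rewrite /frob2 big_mxtens_index; apply: eq_bigr => a _.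
under eq_bigr => j _ do rewrite big_mxtens_index.
rewrite exchange_big; apply: eq_bigr => b _; apply: eq_bigr => j _.
by apply: eq_bigr => k _; rewrite mxE.
Qed.

Lemma tblock_adj m n (M : 'M[C]_(m * n)) a b :
  tblock (adj M) a b = adj (tblock M b a).
Proof. by apply/matrixP => j k; rewrite !mxE. Qed.

Lemma tblock_tens1l m n (U : 'M[C]_n) (M : 'M[C]_(m * n)) a b :
  tblock ((1%:M *t U) *m M) a b = U *m tblock M a b.
Proof.
apply/matrixP => j k; rewrite !mxE big_mxtens_index (bigD1 a) //=.
rewrite [X in _ + X]big1 ?addr0.
  by apply: eq_bigr => j' _; rewrite tensmxE !mxE eqxx mulr1n mul1r.
move=> a' a'a; apply: big1 => j' _.
by rewrite tensmxE mxE eq_sym (negbTE a'a) mulr0n !mul0r.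
Qed.

Lemma tblock_tens1r m n (V : 'M[C]_n) (M : 'M[C]_(m * n)) a b :
  tblock (M *m (1%:M *t V)) a b = tblock M a b *m V.
Proof.
apply/matrixP => j k; rewrite !mxE big_mxtens_index (bigD1 b) //=.
rewrite [X in _ + X]big1 ?addr0.
  by apply: eq_bigr => k' _; rewrite tensmxE !mxE eqxx mulr1n mul1r.
move=> b' b'b; apply: big1 => k' _.
by rewrite tensmxE mxE (negbTE b'b) mulr0n mul0r mulr0.
Qed.

Lemma mxtrace_tens_mul m n (A : 'M[C]_m) (B : 'M[C]_n) (M : 'M[C]_(m * n)) :
  \tr ((A *t B) *m M) = \sum_a \sum_b A a b * \tr (B *m tblock M b a).
Proof.
rewrite /mxtrace big_mxtens_index; apply: eq_bigr => a _.
under eq_bigr => j _ do rewrite mxE big_mxtens_index.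
rewrite exchange_big; apply: eq_bigr => b _.
rewrite mulr_sumr; apply: eq_bigr => j _.
rewrite mxE mulr_sumr; apply: eq_bigr => k _.
by rewrite tensmxE !mxE mulrA.
Qed.

Lemma tblock_sub_rho_f (rho : 'M[C]_(2 * 2)) U a b :
  tblock (rho - rho_f rho U) a b = sub_conj U (tblock rho a b).
Proof.
have -> : tblock (rho - rho_f rho U) a b = tblock rho a b - tblock (rho_f rho U) a b.
  by apply/matrixP => j k; rewrite !mxE.
by rewrite /rho_f adj_tens adj1mx tblock_tens1r tblock_tens1l.
Qed.

Lemma ptraceA_tblock (rho : 'M[C]_(2 * 2)) :
  ptraceA rho = tblock rho 0 0 + tblock rho 1 1.
Proof.
apply/matrixP => j k; rewrite !mxE !big_ord_recl big_ord0 addr0.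
by congr (rho (mxtens_index (_, j)) (mxtens_index (_, k))
          + rho (mxtens_index (_, j)) (mxtens_index (_, k))); apply: val_inj.
Qed.

Lemma frob2_sub_rho_f_tblock (rho : 'M[C]_(2 * 2)) U : adj rho = rho ->
  frob2 (rho - rho_f rho U) =
  frob2 (sub_conj U (tblock rho 0 0)) + frob2 (sub_conj U (tblock rho 1 1))
  + frob2 (sub_conj U (tblock rho 0 1)) + frob2 (sub_conj U (adj (tblock rho 0 1))).
Proof.
move=> herm; have rho10 : tblock rho 1 0 = adj (tblock rho 0 1) by rewrite -tblock_adj herm.
rewrite frob2_tblock !sum_ord2 !tblock_sub_rho_f rho10.
have perm4 (a b c d : R) : a + b + (c + d) = a + d + b + c by ring.
exact: perm4.
Qed.

End TensorBlocks.

Notation ix := (@Ordinal 3 0 isT).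
Notation iy := (@Ordinal 3 1 isT).
Notation iz := (@Ordinal 3 2 isT).

Section Pauli.
Variable R : realType.
Local Notation C := R[i].
Local Notation X := (pauliX R).
Local Notation Y := (pauliY R).
Local Notation Z := (pauliZ R).

Lemma adj_pauli i : adj (pauli R i) = pauli R i.
Proof.
apply/matrixP => j k; rewrite !mxE.
case: i => [[|[|[|i]]] hi] //=; rewrite !mxE;
  case: j k => [[|[|j]] hj] // [[|[|k]] hk] //=;
  rewrite ?rmorph0 ?rmorph1 ?rmorphN1 //.
all: by apply/eqP; rewrite ?rmorphN eq_complex /= ?opprK ?oppr0 ?eqxx.
Qed.

(* Half of [frob2 (sub_conj U P)] when [P] is a Pauli matrix. *)
Definition pauli_defect (P U : 'M[C]_2) : R :=
  2 - complex.Re (\tr (P *m U *m P *m adj U)).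

Lemma frob2_pauliZ_sub_conj (U : 'M[C]_2) : unitary U ->
  frob2 (sub_conj U Z) = 2 * pauli_defect Z U.
Proof.
move=> unitU; rewrite frob2_sub_conj // (adj_pauli iz).
rewrite /pauli_defect /frob2 !sum_ord2 !mxE /=; ring.
Qed.

Lemma frob2_pauliXY_sub_conj (U : 'M[C]_2) (a g : R) : unitary U ->
  frob2 (sub_conj U ((a%:C)%C *: X + (g%:C)%C *: ('i *: Y)))
  = 2 * a ^+ 2 * pauli_defect X U + 2 * g ^+ 2 * pauli_defect Y U.
Proof.
move=> unitU; rewrite frob2_sub_conj // /pauli_defect /frob2 /mxtrace.
rewrite !(sum_ord2, mxE) /=.
move: (U 0 0) (U 0 1) (U 1 0) (U 1 1) => [p1 p2] [q1 q2] [r1 r2] [s1 s2] /=.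
ring.
Qed.

Lemma pauli_defect_coords (U : 'M[C]_2) : unitary U ->
  exists p1 p2 q1 q2 r1 r2 s1 s2 : R,
  [/\ p1 ^+ 2 + p2 ^+ 2 + r1 ^+ 2 + r2 ^+ 2 = 1,
      q1 ^+ 2 + q2 ^+ 2 + s1 ^+ 2 + s2 ^+ 2 = 1,
      U 0 1 = (q1 +i* q2)%C, U 1 0 = (r1 +i* r2)%C &
   [/\ pauli_defect X U = 2 - 2 * (p1 * s1 + p2 * s2 + q1 * r1 + q2 * r2),
       pauli_defect Y U = 2 - 2 * (p1 * s1 + p2 * s2 - q1 * r1 - q2 * r2) &
       pauli_defect Z U = 2 - (p1 ^+ 2 + p2 ^+ 2 + s1 ^+ 2 + s2 ^+ 2
                               - q1 ^+ 2 - q2 ^+ 2 - r1 ^+ 2 - r2 ^+ 2)]].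
Proof.
move/matrixP=> unitU; move: (unitU 0 0) (unitU 1 1).
rewrite /pauli_defect /mxtrace !(sum_ord2, mxE) /=.
move: (U 0 0) (U 0 1) (U 1 0) (U 1 1) => [p1 p2] [q1 q2] [r1 r2] [s1 s2] /=.
case=> col0 _ [col1 _].
exists p1, p2, q1, q2, r1, r2, s1, s2; split => //.
- by rewrite -col0; ring.
- by rewrite -col1; ring.
- by split; ring.
Qed.

Lemma pauli_defect_bounds (U : 'M[C]_2) : unitary U ->
  [/\ 0 <= pauli_defect X U <= 4, 0 <= pauli_defect Y U <= 4,
      0 <= pauli_defect Z U <= 4 &
      pauli_defect X U + pauli_defect Y U + pauli_defect Z U <= 8].
Proof.
move=> /pauli_defect_coords [p1 [p2 [q1 [q2 [r1 [r2 [s1 [s2 [col0 col1 _ _ [-> -> ->]]]]]]]]]].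
have := sqr_ge0 (p1 - s1); have := sqr_ge0 (p2 - s2); have := sqr_ge0 (p1 + s1).
have := sqr_ge0 (p2 + s2); have := sqr_ge0 (q1 - r1); have := sqr_ge0 (q2 - r2).
have := sqr_ge0 (q1 + r1); have := sqr_ge0 (q2 + r2).
have := sqr_ge0 p1; have := sqr_ge0 p2; have := sqr_ge0 q1; have := sqr_ge0 q2.
have := sqr_ge0 r1; have := sqr_ge0 r2; have := sqr_ge0 s1; have := sqr_ge0 s2.
by move=> *; split; rewrite ?andbT; try (apply/andP; split); lra.
Qed.

Lemma pauli_defectZ_diag (U : 'M[C]_2) : unitary U -> U 0 1 = 0 -> U 1 0 = 0 ->
  pauli_defect Z U = 0.
Proof.
move=> /pauli_defect_coords [p1 [p2 [q1 [q2 [r1 [r2 [s1 [s2 [col0 col1 -> -> [_ _ ->]]]]]]]]]].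
case=> q1E q2E [r1E r2E]; rewrite q1E q2E r1E r2E in col0 col1 *.
by rewrite expr0n /= in col0 col1 *; lra.
Qed.

Lemma mxtrace_mul_adj (P B : 'M[C]_2) : adj P = P ->
  \tr (P *m adj B) = (\tr (P *m B))^*.
Proof. by move=> hP; rewrite -mxtrace_adj adj_mul hP mxtrace_mulC. Qed.

Lemma corr_tblockE rho j : adj rho = rho ->
  let B := tblock rho 0 1 in
  [/\ corr rho ix j = 2 * complex.Re (\tr (pauli R j *m B)),
      corr rho iy j = - (2 * complex.Im (\tr (pauli R j *m B))) &
      corr rho iz j = complex.Re (\tr (pauli R j *m (tblock rho 0 0 - tblock rho 1 1)))].
Proof.
move=> herm B.
have rho10 : tblock rho 1 0 = adj B by rewrite -tblock_adj herm.
rewrite /corr !mxE !mxtrace_tens_mul !sum_ord2 rho10 mxtrace_mul_adj ?adj_pauli //.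
rewrite mulmxBr linearB /= !mxE /=.
move: (\tr (_ *m tblock rho 0 0)) (\tr (_ *m B)) (\tr (_ *m tblock rho 1 1)).
by move=> [a1 a2] [b1 b2] [d1 d2]; split => /=; ring.
Qed.

Lemma herm_pauliZ_decomp (H : 'M[C]_2) : adj H = H ->
  complex.Re (\tr (X *m H)) = 0 -> complex.Re (\tr (Y *m H)) = 0 ->
  exists g : C, H = g%:M + ((complex.Re (\tr (Z *m H)) / 2)%:C)%C *: Z.
Proof.
move=> /matrixP herm trX trY; exists ((complex.Re (H 0 0 + H 1 1) / 2)%:C)%C.
apply: eq_mx2; move: (herm 0 0) (herm 0 1) (herm 1 1) trX trY;
  rewrite /mxtrace !(sum_ord2, mxE) /=;
  move: (H 0 0) (H 0 1) (H 1 0) (H 1 1) => [a1 a2] [b1 b2] [c1 c2] [d1 d2] /=.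
all: rewrite !conj_rect -!complexr0 ?mulr1n ?mulr1 /=.
all: move=> /eqP + /eqP + /eqP + tX tY; rewrite !eq_complex /=.
all: move=> /andP[/eqP ? /eqP ?] /andP[/eqP ? /eqP ?] /andP[/eqP ? /eqP ?].
all: by apply/eqP; rewrite eq_complex /=; apply/andP; split; apply/eqP; lra.
Qed.

Lemma pauliXY_decomp (B : 'M[C]_2) :
  complex.Re (\tr (Z *m B)) = 0 -> complex.Im (\tr (Z *m B)) = 0 ->
  complex.Im (\tr (X *m B)) = 0 -> complex.Re (\tr (Y *m B)) = 0 ->
  exists b : C, B = b%:M + (((complex.Re (\tr (X *m B)) / 2)%:C)%C *: X
                           + ((complex.Im (\tr (Y *m B)) / 2)%:C)%C *: ('i *: Y)).
Proof.
move=> reZ imZ imX reY; exists (B 0 0).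
apply: eq_mx2; move: reZ imZ imX reY; rewrite /mxtrace !(sum_ord2, mxE) /=;
  move: (B 0 0) (B 0 1) (B 1 0) (B 1 1) => [a1 a2] [b1 b2] [c1 c2] [d1 d2] /=.
all: rewrite -!complexr0 ?mulr1n ?mulr0n ?mulr1 ?mulr0 /= => ? ? ? ?.
all: by apply/eqP; rewrite eq_complex /=; apply/andP; split; apply/eqP; lra.
Qed.

End Pauli.

Section DephasingIdentity.
Variable R : realType.
Local Notation C := R[i].
Local Notation X := (pauliX R).
Local Notation Y := (pauliY R).
Local Notation Z := (pauliZ R).

Lemma tblock_decomp_diag_corr rho : adj rho = rho -> is_diag_mx (corr rho) ->
  (exists g : C, tblock rho 0 0 - tblock rho 1 1 = g%:M + ((corr rho iz iz / 2)%:C)%C *: Z)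
  /\ (exists b : C, tblock rho 0 1 = b%:M + (((corr rho ix ix / 4)%:C)%C *: X
                                           + ((- corr rho iy iy / 4)%:C)%C *: ('i *: Y))).
Proof.
move=> herm /is_diag_mxP corr0.
set A := tblock rho 0 0; set B := tblock rho 0 1; set D := tblock rho 1 1.
have [xX yX zX] := corr_tblockE ix herm; have [xY yY zY] := corr_tblockE iy herm.
have [xZ yZ zZ] := corr_tblockE iz herm.
rewrite /= -/A -/B -/D in xX yX zX xY yY zY xZ yZ zZ.
have reYB : complex.Re (\tr (Y *m B)) = 0.
  by move: (corr0 ix iy isT); rewrite xY => h; clear -h; lra.
have reZB : complex.Re (\tr (Z *m B)) = 0.
  by move: (corr0 ix iz isT); rewrite xZ => h; clear -h; lra.
have imXB : complex.Im (\tr (X *m B)) = 0.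
  by move: (corr0 iy ix isT); rewrite yX => h; clear -h; lra.
have imZB : complex.Im (\tr (Z *m B)) = 0.
  by move: (corr0 iy iz isT); rewrite yZ => h; clear -h; lra.
have reXD : complex.Re (\tr (X *m (A - D))) = 0 by rewrite -zX; apply: corr0.
have reYD : complex.Re (\tr (Y *m (A - D))) = 0 by rewrite -zY; apply: corr0.
have hermD : adj (A - D) = A - D by rewrite adjB -!tblock_adj herm.
split.
  by have [g DE] := herm_pauliZ_decomp hermD reXD reYD; exists g; rewrite zZ.
have [b BE] := pauliXY_decomp reZB imZB imXB reYB; exists b; rewrite xX yY.
have half_x (x : R) : 2 * x / 4 = x / 2 by field.
have half_y (y : R) : - - (2 * y) / 4 = y / 2 by field.
by rewrite half_x half_y.
Qed.

Lemma frob2_sub_rho_fE rho U :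
  is_state rho -> is_diag_mx (corr rho) -> cyclic rho U ->
  4 * frob2 (rho - rho_f rho U) =
  corr rho ix ix ^+ 2 * pauli_defect X U + corr rho iy iy ^+ 2 * pauli_defect Y U
  + corr rho iz iz ^+ 2 * pauli_defect Z U.
Proof.
case=> herm _ _ diagT [unitU commU].
have UU : U *m adj U = 1%:M := mulmx1C unitU.
have [[g DE] [b BE]] := tblock_decomp_diag_corr herm diagT.
rewrite ptraceA_tblock in commU.
have fAD : 2 * (frob2 (sub_conj U (tblock rho 0 0)) + frob2 (sub_conj U (tblock rho 1 1)))
           = (corr rho iz iz / 2) ^+ 2 * frob2 (sub_conj U Z).
  by rewrite (frob2_sub_conj_split UU commU) [in LHS]DE (sub_conj_scalar_add UU)
    frob2_sub_conj_scale.
have fB : frob2 (sub_conj U (tblock rho 0 1)) =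
    2 * (corr rho ix ix / 4) ^+ 2 * pauli_defect X U
  + 2 * (- corr rho iy iy / 4) ^+ 2 * pauli_defect Y U.
  by rewrite [in LHS]BE (sub_conj_scalar_add UU) (frob2_pauliXY_sub_conj _ _ unitU).
have fB' : frob2 (sub_conj U (adj (tblock rho 0 1))) = frob2 (sub_conj U (tblock rho 0 1)).
  by rewrite sub_conj_adj frob2_adj.
have arith (fA fD fB0 fB1 fZ x y z dX dY dZ : R) :
    2 * (fA + fD) = (z / 2) ^+ 2 * fZ -> fZ = 2 * dZ ->
    fB0 = 2 * (x / 4) ^+ 2 * dX + 2 * (- y / 4) ^+ 2 * dY -> fB1 = fB0 ->
    4 * (fA + fD + fB0 + fB1) = x ^+ 2 * dX + y ^+ 2 * dY + z ^+ 2 * dZ.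
  move=> hAD hZ hB ->.
  have -> : 4 * (fA + fD + fB0 + fB0) = 2 * (2 * (fA + fD)) + 8 * fB0 by ring.
  by rewrite hAD hZ hB; field.
rewrite (frob2_sub_rho_f_tblock U herm).
exact: arith fAD (frob2_pauliZ_sub_conj unitU) fB fB'.
Qed.

End DephasingIdentity.

Section SortedSpectrum.
Local Open Scope classical_set_scope.
Variable R : realType.

Lemma sorted_spectrum_perm (A : 'M[R]_3) (S s : seq R) :
  char_poly A = \prod_(x <- S) ('X - x%:P) -> sorted_spectrum A s -> perm_eq s S.
Proof. by move=> chiA [_ _ chiAs]; apply: prod_XsubC_eq; rewrite -chiA. Qed.

Lemma sorted_spectrum_sort (A : 'M[R]_3) (S : seq R) : size S = 3 ->
  char_poly A = \prod_(x <- S) ('X - x%:P) -> sorted_spectrum A (sort >=%R S).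
Proof.
move=> sizeS chiA; split; first by rewrite size_sort.
  by apply: sort_sorted => x y; exact: le_total.
by rewrite chiA; apply: perm_big; rewrite perm_sym perm_sort.
Qed.

Lemma min3_unique (x y z m : R) : m \in [:: x; y; z] ->
  m <= x -> m <= y -> m <= z -> m = Order.min x (Order.min y z).
Proof.
rewrite !inE => mxyz mx my mz; apply/le_anti; rewrite !le_min mx my mz /=.
by case/or3P: mxyz => /eqP ->; rewrite !ge_min lexx ?orbT.
Qed.

Local Notation sqcorr rho i := (corr rho i i ^+ 2).

Lemma Mval_diag (rho : 'M[R[i]]_(2 * 2)) : is_diag_mx (corr rho) ->
  Mval rho = sqcorr rho ix + sqcorr rho iy + sqcorr rho iz
             - Order.min (sqcorr rho ix) (Order.min (sqcorr rho iy) (sqcorr rho iz)).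
Proof.
move=> /diag_mxP [d corrE]; pose S := [:: sqcorr rho ix; sqcorr rho iy; sqcorr rho iz].
have chiA : char_poly ((corr rho)^T *m corr rho) = \prod_(x <- S) ('X - x%:P).
  rewrite corrE tr_diag_mx mulmx_diag char_poly_trig ?diag_mx_is_trig //.
  rewrite !big_ord_recl big_ord0 !big_cons big_nil /S corrE !mxE !eqxx !mulr1n.
  by rewrite -!expr2; congr (('X - (d 0 _ ^+ 2)%:P) *
    (('X - (d 0 _ ^+ 2)%:P) * (('X - (d 0 _ ^+ 2)%:P) * 1))); apply: val_inj.
have specS : exists m, [set m | exists s, sorted_spectrum ((corr rho)^T *m corr rho) s
                                  /\ m = s`_0 + s`_1] m.
  by exists ((sort >=%R S)`_0 + (sort >=%R S)`_1), (sort >=%R S); split=> //;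
    apply: sorted_spectrum_sort.
rewrite /Mval; have [s [spec_s ->]] := xgetPex 0 specS.
have perm_sS := sorted_spectrum_perm chiA spec_s.
case: spec_s; case: s perm_sS => [|x [|y [|z [|? ?]]]] //= perm_sS _ /and3P[xy yz _] _.
have sumE : x + y + z = sqcorr rho ix + sqcorr rho iy + sqcorr rho iz.
  have : \sum_(t <- [:: x; y; z]) t = \sum_(t <- S) t by apply: perm_big.
  by rewrite !big_cons big_nil !addr0 !addrA.
have zS : z \in S by rewrite -(perm_mem perm_sS) !inE eqxx !orbT.
have z_le e' : e' \in S -> z <= e'.
  by rewrite -(perm_mem perm_sS) !inE => /or3P[] /eqP ->; rewrite ?lexx //; lra.
rewrite -(min3_unique zS) ?z_le ?inE ?eqxx ?orbT //; lra.
Qed.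

End SortedSpectrum.

Lemma weighted_sum_le_min (R : realFieldType) (d1 d2 d3 w1 w2 w3 : R) :
  0 <= d1 -> 0 <= d2 -> 0 <= d3 ->
  0 <= w1 <= 4 -> 0 <= w2 <= 4 -> 0 <= w3 <= 4 -> w1 + w2 + w3 <= 8 ->
  d1 * w1 + d2 * w2 + d3 * w3 <= 4 * (d1 + d2 + d3 - Order.min d1 (Order.min d2 d3)).
Proof.
move=> d1_ge0 d2_ge0 d3_ge0 /andP[? ?] /andP[? ?] /andP[? ?] ?.
set m := Order.min _ _.
have m1 : m <= d1 by rewrite ge_min lexx.
have m2 : m <= d2 by rewrite !ge_min lexx orbT.
have m3 : m <= d3 by rewrite !ge_min lexx !orbT.
have m0 : 0 <= m by rewrite !le_min d1_ge0 d2_ge0 d3_ge0.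
(* the claim is the sum of these four nonnegative products *)
have : 0 <= (d1 - m) * (4 - w1) by apply: mulr_ge0; lra.
have : 0 <= (d2 - m) * (4 - w2) by apply: mulr_ge0; lra.
have : 0 <= (d3 - m) * (4 - w3) by apply: mulr_ge0; lra.
have : 0 <= m * (8 - (w1 + w2 + w3)) by apply: mulr_ge0; lra.
by move=> *; lra.
Qed.

Section Bounds.
Variable R : realType.
Local Notation C := R[i].

Lemma frob2_sub_rho_f_le_Mval (rho : 'M[C]_(2 * 2)) U :
  is_state rho -> is_diag_mx (corr rho) -> cyclic rho U ->
  frob2 (rho - rho_f rho U) <= Mval rho.
Proof.
move=> st diagT cycU; have [bX bY bZ b8] := pauli_defect_bounds cycU.1.
rewrite -(@ler_pM2l _ 4) // frob2_sub_rho_fE // Mval_diag //.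
exact: weighted_sum_le_min (sqr_ge0 _) (sqr_ge0 _) (sqr_ge0 _) bX bY bZ b8.
Qed.

Lemma dmax_le (rho : 'M[C]_(2 * 2)) (r : R) :
  (forall U, cyclic rho U -> frob2 (rho - rho_f rho U) <= r) ->
  dmax rho <= (Num.sqrt 2)^-1 * Num.sqrt r.
Proof.
move=> frob2_le; apply: ge_sup.
  exists (dist rho 1%:M), 1%:M => //; split; last by rewrite mulmx1 mul1mx.
  by rewrite /unitary adj1mx mulmx1.
move=> _ [U cycU <-]; rewrite /dist frobE; apply: ler_wpM2l.
  by rewrite invr_ge0 sqrtr_ge0.
by rewrite ler_sqrt ?frob2_le // (le_trans (frob2_ge0 _) (frob2_le _ cycU)).
Qed.

End Bounds.

Lemma ord3_cases (i : 'I_3) : [\/ i = ix, i = iy | i = iz].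
Proof.
case: i => [[|[|[|i]]] hi] //; [apply: Or31 | apply: Or32 | apply: Or33]; exact: val_inj.
Qed.

Section Counterexample.
Variable R : realType.
Local Notation C := R[i].

(* In the basis |00>, |01>, |10>, |11> (index [2 a + b] for |ab>):
   rho_ex = (3 |00><00| + |00><11| + |11><00| + |11><11|) / 4. *)
Definition rho_ex_entry (i j : nat) : R :=
  match i, j with
  | 0, 0 => 3 / 4
  | 0, 3 | 3, 0 | 3, 3 => 1 / 4
  | _, _ => 0
  end.

Definition rho_ex : 'M[C]_(2 * 2) := \matrix_(i, j) ((rho_ex_entry i j)%:C)%C.

Lemma rho_ex_herm : adj rho_ex = rho_ex.
Proof.
apply/matrixP => i j; rewrite !mxE -!complexr0 conj_rect oppr0; congr (_ +i* _)%C.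
by case: i => [[|[|[|[|i]]]] ?]; case: j => [[|[|[|[|j]]]] ?].
Qed.

Lemma rho_ex_state : is_state rho_ex.
Proof.
split; first exact: rho_ex_herm.
- move=> v; rewrite !(mxE, big_ord_recl, big_ord0) /=.
  move: (v _ 0) (v (lift _ _) 0) (v (lift _ (lift _ _)) 0)
        (v (lift _ (lift _ (lift _ _))) 0) => [a1 a2] [b1 b2] [c1 c2] [d1 d2] /=.
  rewrite lecE /=; apply/andP; split; first by apply/eqP; ring.
  have := sqr_ge0 (a1 + d1); have := sqr_ge0 (a2 + d2).
  have := sqr_ge0 a1; have := sqr_ge0 a2; move=> *; lra.
- rewrite /mxtrace !(mxE, big_ord_recl, big_ord0) /=.
  by apply/eqP; rewrite eq_complex /=; apply/andP; split; apply/eqP; lra.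
Qed.

Lemma rho_ex_corr i j :
  corr rho_ex i j = if i == j then [:: 1 / 2; - (1 / 2); 1]`_i else 0.
Proof.
have [cx cy cz] := corr_tblockE j rho_ex_herm.
case: (ord3_cases i) => ->; rewrite ?cx ?cy ?cz {cx cy cz};
  case: (ord3_cases j) => -> /=; rewrite /mxtrace !(sum_ord2, mxE) /=; lra.
Qed.

Lemma rho_ex_diag : is_diag_mx (corr rho_ex).
Proof. by apply/is_diag_mxP => i j ij; rewrite rho_ex_corr ifN. Qed.

Lemma rho_ex_corr_diag :
  [/\ corr rho_ex ix ix = 1 / 2, corr rho_ex iy iy = - (1 / 2) & corr rho_ex iz iz = 1].
Proof. by rewrite !rho_ex_corr. Qed.

Lemma Mval_rho_ex : Mval rho_ex = 5 / 4.
Proof.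
rewrite (Mval_diag rho_ex_diag); have [-> -> ->] := rho_ex_corr_diag.
rewrite -(@min3_unique _ _ _ _ ((1 / 2) ^+ 2)) ?inE ?eqxx // ?sqrrN //; lra.
Qed.

Lemma cyclic_rho_ex_offdiag U : cyclic rho_ex U -> U 0 1 = 0 /\ U 1 0 = 0.
Proof.
case=> _ /matrixP comm; move: (comm 0 1) (comm 1 0); clear comm.
rewrite ptraceA_tblock !(sum_ord2, mxE) /=.
move: (U 0 0) (U 0 1) (U 1 0) (U 1 1) => [p1 p2] [q1 q2] [r1 r2] [s1 s2] /=.
move=> /eqP + /eqP; rewrite !eq_complex /= => /andP[/eqP ? /eqP ?] /andP[/eqP ? /eqP ?].
by split; apply/eqP; rewrite eq_complex /=; apply/andP; split; apply/eqP; lra.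
Qed.

Lemma dmax_rho_ex : dmax rho_ex <= (Num.sqrt 2)^-1.
Proof.
have bound (f dX dY dZ : R) :
    4 * f = (1 / 2) ^+ 2 * dX + (- (1 / 2)) ^+ 2 * dY + 1 ^+ 2 * dZ ->
    dZ = 0 -> dX + dY + dZ <= 8 -> f <= 1.
  by move=> ? ? ?; lra.
apply: le_trans (dmax_le (r := 1) _) _; last by rewrite sqrtr1 mulr1.
move=> U cycU; have [U01 U10] := cyclic_rho_ex_offdiag cycU.
have [_ _ _ b8] := pauli_defect_bounds cycU.1.
have [cx cy cz] := rho_ex_corr_diag.
have := frob2_sub_rho_fE rho_ex_state rho_ex_diag cycU; rewrite cx cy cz => e.
exact: bound e (pauli_defectZ_diag cycU.1 U01 U10) b8.
Qed.

End Counterexample.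

Theorem theorem3 (R : realType) :
  (forall rho : 'M[R[i]]_(2 * 2),
      is_state rho -> is_diag_mx (corr rho) ->
      (Num.sqrt 2)^-1 < dmax rho -> 1 < Mval rho)
  /\
  (exists rho : 'M[R[i]]_(2 * 2),
      [/\ is_state rho, is_diag_mx (corr rho), 1 < Mval rho
        & dmax rho <= (Num.sqrt 2)^-1]).
Proof.
split.
- move=> rho st diagT; apply: contraTT; rewrite -!leNgt => Mval_le1.
  apply: le_trans (dmax_le (r := 1) _) _; last by rewrite sqrtr1 mulr1.
  by move=> U cycU; apply: le_trans Mval_le1; exact: frob2_sub_rho_f_le_Mval.
- exists (rho_ex R); split.
  + exact: rho_ex_state.
  + exact: rho_ex_diag.
  + by rewrite Mval_rho_ex; lra.
  + exact: dmax_rho_ex.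
Qed.
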